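(* Let $\Theta_{3,5,5}$ be the graph consisting of two vertices joined by three internally vertex-disjoint paths of lengths $3$, $5$ and $5$. Then $\mathrm{ex}(n,\Theta_{3,5,5})=\Omega(n^{5/4})$.
   Context: For a graph $H$, $\mathrm{ex}(n,H)$ denotes the maximum number of edges in a graph on $n$ vertices that contains no subgraph isomorphic to $H$. *)

From mathcomp Require Import all_boot.
From Stdlib Require Import Reals.
Set Implicit Arguments. Unset Strict Implicit. Unset Printing Implicit Defensive.

(* A (finite simple) graph on a finite vertex type V is given by its edge set:
   a set of 2-element subsets of V. *)
Definition simple_graph (V : finType) (G : {set {set V}}) : bool :=
  [forall e in G, #|e| == 2].

Definition nedges (V : finType) (G : {set {set V}}) : nat := #|G|.

Definition contains_subgraph (V W : finType) (G : {set {set V}}) (H : {set {set W}}) : bool :=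
  [exists f : {ffun W -> V}, injectiveb f && [forall e in H, (f @: e) \in G]].

Definition ex (n : nat) (W : finType) (H : {set {set W}}) : nat :=
  \max_(G : {set {set 'I_n}} | simple_graph G && ~~ contains_subgraph G H) nedges G.

(* Theta_{3,5,5} on vertex set 'I_12: endpoints 0 and 1,
   path of length 3: 0-2-3-1, paths of length 5: 0-4-5-6-7-1 and 0-8-9-10-11-1. *)
Definition theta355_edge_list : seq (nat * nat) :=
  [:: (0,2); (2,3); (3,1);
      (0,4); (4,5); (5,6); (6,7); (7,1);
      (0,8); (8,9); (9,10); (10,11); (11,1)].

Definition Theta355 : {set {set 'I_12}} :=
  [set:: map (fun p : nat * nat => [set (inord p.1 : 'I_12); inord p.2]) theta355_edge_list].

(* The extremal graph is the point-line incidence graph over a finite field F: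
   points (a, x) and lines (c, y) both range over F * F^3, and (a, x) lies on
   (c, y) iff x_i + y_i = c a^i for i = 1, 2, 3.  It has 2|F|^4 vertices and
   |F|^5 edges.  Along a path from a point p to a line L, the sum p + L is an
   alternating sum of slopes times moment vectors (a, a^2, a^3) of the points
   visited.  Comparing a path of length 3 with a path of length 5 from p to L
   gives a relation between the moment vectors of four abscissas, and the
   Vandermonde structure forces the fourth vertex of the 5-path to have the
   abscissa of p; as it lies on L, it is determined.  Hence the two 5-paths of a
   copy of Theta_{3,5,5} would share a vertex.  Taking |F| = 2^k with
   2 * 16^k <= n < 32 * 16^k gives ex(n, Theta_{3,5,5}) >= 32^k >= n^(5/4) / 128. *)

From Stdlib Require Import Reals Lra.
From mathcomp Require Import all_boot all_algebra finfield ring zify.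

Import GRing.Theory.
Set Implicit Arguments. Unset Strict Implicit. Unset Printing Implicit Defensive.

Lemma set2_eq (T : finType) (a b c d : T) :
  [set a; b] = [set c; d] -> a != b -> (a = c /\ b = d) \/ (a = d /\ b = c).
Proof.
move=> E.
have : a \in [set c; d] by rewrite -E set21.
have : b \in [set c; d] by rewrite -E set22.
by move=> /set2P [] -> /set2P [] ->; rewrite ?eqxx // => _; [right | left].
Qed.

Lemma contains_subgraph_imset (V V' W : finType) (g : V -> V')
    (G : {set {set V}}) (H : {set {set W}}) :
  injective g -> (forall w, exists2 e, e \in H & w \in e) ->
  contains_subgraph [set g @: e | e : {set V} in G] H -> contains_subgraph G H.
Proof.
move=> g_inj H_cover /existsP [f /andP [/injectiveP f_inj /forallP fH]].
have fHG e : e \in H -> exists2 e', e' \in G & f @: e = g @: e'.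
  by move=> eH; have /imsetP [e' e'G ->] := implyP (fH e) eH; exists e'.
have /fin_all_exists [h fE] : forall w, exists v, f w = g v.
  move=> w; have [e eH we] := H_cover w.
  have [e' _ fe] := fHG e eH.
  have /imsetP [v _ ->] : f w \in g @: e' by rewrite -fe imset_f.
  by exists v.
apply/existsP; exists [ffun w => h w]; apply/andP; split.
  by apply/injectiveP => u v; rewrite !ffunE => huv; apply: f_inj; rewrite !fE huv.
apply/forallP => e; apply/implyP => eH; have [e' e'G fe] := fHG e eH.
suff -> : [ffun w => h w] @: e = e' by [].
apply: (imset_inj g_inj); rewrite -fe -imset_comp.
by apply: eq_imset => w /=; rewrite ffunE fE.
Qed.

Lemma nedges_le_ex (V W : finType) (G : {set {set V}}) (H : {set {set W}}) (n : nat) :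
  #|V| <= n -> (forall w, exists2 e, e \in H & w \in e) ->
  simple_graph G -> ~~ contains_subgraph G H -> nedges G <= ex n H.
Proof.
move=> Vn H_cover G_simple G_free.
pose g (v : V) : 'I_n := widen_ord Vn (enum_rank v).
have g_inj : injective g by move=> u v /(congr1 val) /= /val_inj /enum_rank_inj.
have -> : nedges G = nedges [set g @: e | e : {set V} in G].
  by rewrite /nedges card_imset //; exact: imset_inj.
apply: (@leq_bigmax_cond _ (fun G => simple_graph G && ~~ contains_subgraph G H)).
apply/andP; split.
  apply/forallP => e'; apply/implyP => /imsetP [e eG ->].
  by rewrite card_imset //; exact: (implyP (forallP G_simple e) eG).
by apply: contra G_free; exact: contains_subgraph_imset.
Qed.

(* The automorphism of Theta_{3,5,5} exchanging its roots 0 and 1. *)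
Definition theta_flip (k : nat) : nat := nth k [:: 1; 0; 3; 2; 7; 6; 5; 4; 11; 10; 9; 8] k.

Lemma theta_flip_edge i j : (i, j) \in theta355_edge_list ->
  (theta_flip j, theta_flip i) \in theta355_edge_list.
Proof.
have /allP : all (fun e => (theta_flip e.2, theta_flip e.1) \in theta355_edge_list)
  theta355_edge_list by [].
exact.
Qed.

Lemma theta_flip_lt k : k < 12 -> theta_flip k < 12.
Proof. by do 12! case: k => [//|k]. Qed.

Lemma theta_flipK k : k < 12 -> theta_flip (theta_flip k) = k.
Proof. by do 12! case: k => [//|k]. Qed.

Lemma Theta355_edge i j : (i, j) \in theta355_edge_list ->
  [set inord i; inord j] \in Theta355.
Proof. by move=> ij; rewrite inE; apply: (map_f _ ij). Qed.

Lemma Theta355_cover (x : 'I_12) : exists2 e, e \in Theta355 & x \in e.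
Proof.
have /allP/(_ x) : all (fun k => has (fun e => (e.1 == k) || (e.2 == k)) theta355_edge_list)
  (iota 0 12) by [].
rewrite mem_iota ltn_ord => /(_ isT) /hasP [[i j] ij /= ij_x].
exists [set inord i; inord j]; first exact: Theta355_edge.
by rewrite -[x]inord_val; case/orP: ij_x => /eqP <-; rewrite ?set21 ?set22.
Qed.

Section Incidence.
Local Open Scope ring_scope.
Variable F : fieldType.

Definition point := (F * {ffun 'I_3 -> F})%type.
Definition line := (F * {ffun 'I_3 -> F})%type.

Definition incident (p : point) (l : line) : bool :=
  [forall i, p.2 i + l.2 i == l.1 * p.1 ^+ i.+1].

Definition point_on (l : line) (a : F) : point :=
  (a, [ffun i : 'I_3 => l.1 * a ^+ i.+1 - l.2 i]).
Definition line_through (p : point) (c : F) : line :=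
  (c, [ffun i : 'I_3 => c * p.1 ^+ i.+1 - p.2 i]).

Lemma incidentP (p : point) (l : line) :
  reflect (forall i, p.2 i + l.2 i = l.1 * p.1 ^+ i.+1) (incident p l).
Proof. by apply: (iffP forallP) => E i; apply/eqP. Qed.

Lemma incident_line_through (p : point) (c : F) : incident p (line_through p c).
Proof. by apply/incidentP => i; rewrite ffunE addrC subrK. Qed.

Lemma incident_pointE (p : point) (l : line) : incident p l -> p = point_on l p.1.
Proof.
case: p => a x /incidentP /= E; congr (_, _); apply/ffunP => i.
by rewrite ffunE -E addrK.
Qed.

Lemma incident_lineE (p : point) (l : line) : incident p l -> l = line_through p l.1.
Proof.
case: l => c y /incidentP /= E; congr (_, _); apply/ffunP => i.
by rewrite ffunE -E addrC addKr.
Qed.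

Lemma cubic_moments_rigid (a r s t x y z : F) :
  x != 0 -> y != 0 -> r != a -> r != t ->
  (forall k, (0 < k < 4)%N ->
     x * (t ^+ k - a ^+ k) + y * (r ^+ k - a ^+ k) = z * (s ^+ k - a ^+ k)) ->
  t = a.
Proof.
move=> x0 y0 ra rt E.
pose e k := x * (t ^+ k - a ^+ k) + y * (r ^+ k - a ^+ k) - z * (s ^+ k - a ^+ k).
have e0 k : (0 < k < 4)%N -> e k = 0 by move=> k4; rewrite /e E // subrr.
(* Combining the identities with the coefficients of (X - a)(X - t)(X - s), which
   vanishes at a, t and s, leaves only the term in r; likewise for t. *)
have Er : y * (r - a) * (r - t) * (r - s) = 0.
  rewrite -[0](_ : e 3 - (a + t + s) * e 2 + (a * t + a * s + t * s) * e 1 = 0).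
    by rewrite /e; ring.
  by rewrite !e0 // !mulr0 subrr addr0.
have Et : x * (t - a) * (t - r) * (t - s) = 0.
  rewrite -[0](_ : e 3 - (a + r + s) * e 2 + (a * r + a * s + r * s) * e 1 = 0).
    by rewrite /e; ring.
  by rewrite !e0 // !mulr0 subrr addr0.
have rs : r = s.
  by move/eqP: Er; rewrite !mulf_eq0 (negbTE y0) !subr_eq0 (negbTE ra) (negbTE rt) => /eqP.
move/eqP: Et; rewrite -rs !mulf_eq0 (negbTE x0) !subr_eq0 [t == r]eq_sym (negbTE rt).
by rewrite !orbF => /eqP.
Qed.

Lemma incident_point_inj (l : line) (p p' : point) :
  incident p l -> incident p' l -> p.1 = p'.1 -> p = p'.
Proof. by move=> /incident_pointE -> /incident_pointE -> /= ->. Qed.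

Lemma incident_line_inj (p : point) (l l' : line) :
  incident p l -> incident p l' -> l.1 = l'.1 -> l = l'.
Proof. by move=> /incident_lineE -> /incident_lineE -> /= ->. Qed.

Lemma five_path_abscissa (p q p2 p4 : point) (M L l1 l3 : line) :
  incident p M -> incident q M -> incident q L ->
  incident p l1 -> incident p2 l1 -> incident p2 l3 -> incident p4 l3 -> incident p4 L ->
  p != p2 -> l1 != l3 -> p2 != p4 -> l3 != L -> p4.1 = p.1.
Proof.
move=> pM qM qL pl1 p2l1 p2l3 p4l3 p4L pp2 l13 p24 l3L.
have ra : p2.1 != p.1 by apply: contra_neq pp2 => /esym; exact: incident_point_inj pl1 p2l1.
have rt : p2.1 != p4.1 by apply: contra_neq p24; exact: incident_point_inj p2l3 p4l3.
have b3b1 : l3.1 - l1.1 != 0.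
  by rewrite subr_eq0; apply: contra_neq l13 => /esym; exact: incident_line_inj p2l1 p2l3.
have bb3 : L.1 - l3.1 != 0.
  by rewrite subr_eq0; apply: contra_neq l3L => /esym; exact: incident_line_inj p4l3 p4L.
apply: (cubic_moments_rigid (s := q.1) (z := L.1 - M.1) bb3 b3b1 ra rt).
move=> [//|k] /andP [_]; rewrite ltnS => k3; pose i := Ordinal k3.
have E (u : point) (l : line) : incident u l -> u.2 i + l.2 i = l.1 * u.1 ^+ k.+1.
  by move/incidentP/(_ i).
set a := p.1; set r := p2.1; set t := p4.1; set s := q.1.
set b := L.1; set b1 := l1.1; set b3 := l3.1; set m := M.1.
(* p_i + L_i is computed along both paths from p to L. *)
have path3 : p.2 i + L.2 i = m * a ^+ k.+1 - m * s ^+ k.+1 + b * s ^+ k.+1.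
  by rewrite -(E _ _ pM) -(E _ _ qM) -(E _ _ qL); ring.
have path5 : p.2 i + L.2 i =
    b1 * a ^+ k.+1 - b1 * r ^+ k.+1 + b3 * r ^+ k.+1 - b3 * t ^+ k.+1 + b * t ^+ k.+1.
  by rewrite -(E _ _ pl1) -(E _ _ p2l1) -(E _ _ p2l3) -(E _ _ p4l3) -(E _ _ p4L); ring.
transitivity (p.2 i + L.2 i - b * a ^+ k.+1).
  by rewrite path5; ring.
by rewrite path3; ring.
Qed.

End Incidence.

Section IncidenceGraph.
Variable F : fieldType.

Definition vertex := (point F + line F)%type.

Definition adj (u v : vertex) : bool :=
  match u, v with
  | inl p, inr l | inr l, inl p => incident p l
  | _, _ => false
  end.

Lemma adjC (u v : vertex) : adj u v = adj v u.
Proof. by case: u v => [?|?] [?|?]. Qed.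

Lemma adj_pointP (p : point F) (v : vertex) :
  adj (inl p) v -> exists2 l, v = inr l & incident p l.
Proof. by case: v => // l; exists l. Qed.

Lemma adj_lineP (l : line F) (v : vertex) :
  adj (inr l) v -> exists2 p, v = inl p & incident p l.
Proof. by case: v => // p; exists p. Qed.

Lemma five_path_end (p q : point F) (M L : line F) (v4 v5 v6 v7 : vertex) :
  incident p M -> incident q M -> incident q L ->
  adj (inl p) v4 -> adj v4 v5 -> adj v5 v6 -> adj v6 v7 -> adj v7 (inr L) ->
  inl p != v5 -> v4 != v6 -> v5 != v7 -> v6 != inr L ->
  v7 = inl (point_on L p.1).
Proof.
move=> pM qM qL /adj_pointP [l1 -> pl1] /adj_lineP [p2 -> p2l1].
move=> /adj_pointP [l3 -> p2l3] /adj_lineP [p4 -> p4l3] /= p4L pp2 l13 p24 l3L.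
congr inl; rewrite -(five_path_abscissa pM qM qL pl1 p2l1 p2l3 p4l3 p4L) //.
exact: incident_pointE.
Qed.

Definition theta_hom (w : nat -> vertex) : Prop :=
  forall i j, (i, j) \in theta355_edge_list -> adj (w i) (w j).

Lemma theta_hom_flip (w : nat -> vertex) : theta_hom w -> theta_hom (w \o theta_flip).
Proof. by move=> A i j /theta_flip_edge /A; rewrite adjC. Qed.

Lemma no_theta_hom_at_point (w : nat -> vertex) (p : point F) :
  theta_hom w -> (forall i j, i < 12 -> j < 12 -> w i = w j -> i = j) ->
  w 0 = inl p -> False.
Proof.
move=> A w_inj w0.
have D i j : i < 12 -> j < 12 -> i != j -> w i != w j.
  by move=> i12 j12; apply: contra_neq; exact: w_inj.
have /adj_pointP [M w2 pM] : adj (inl p) (w 2) by rewrite -w0; exact: A.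
have /adj_lineP [q w3 qM] : adj (inr M) (w 3) by rewrite -w2; exact: A.
have /adj_pointP [L w1 qL] : adj (inl q) (w 1) by rewrite -w3; exact: A.
have branch_end i4 i5 i6 i7 :
    adj (w 0) (w i4) -> adj (w i4) (w i5) -> adj (w i5) (w i6) -> adj (w i6) (w i7) ->
    adj (w i7) (w 1) -> w 0 != w i5 -> w i4 != w i6 -> w i5 != w i7 -> w i6 != w 1 ->
    w i7 = inl (point_on L p.1).
  by rewrite w0 w1; exact: five_path_end pM qM qL.
have [w7 w11] : w 7 = inl (point_on L p.1) /\ w 11 = inl (point_on L p.1).
  split; [apply: (branch_end 4 5 6) | apply: (branch_end 8 9 10)]; by [apply: A | apply: D].
by move/w_inj: (etrans w7 (esym w11)) => /(_ isT isT).
Qed.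

Lemma no_injective_theta_hom (w : nat -> vertex) :
  theta_hom w -> ~ (forall i j, i < 12 -> j < 12 -> w i = w j -> i = j).
Proof.
move=> A w_inj; case w0: (w 0) => [p | M]; first exact: no_theta_hom_at_point A w_inj w0.
(* Along the path 0-2-3-1 the root w 1 is then a point; theta_flip makes it w 0. *)
have /adj_lineP [q w2 _] : adj (inr M) (w 2) by rewrite -w0; exact: A.
have /adj_pointP [L w3 _] : adj (inl q) (w 3) by rewrite -w2; exact: A.
have /adj_lineP [p w1 _] : adj (inr L) (w 1) by rewrite -w3; exact: A.
apply: (no_theta_hom_at_point (theta_hom_flip A) _ w1) => i j i12 j12 /w_inj.
by move=> /(_ (theta_flip_lt i12) (theta_flip_lt j12)) /(congr1 theta_flip); rewrite !theta_flipK.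
Qed.

End IncidenceGraph.

Section FiniteIncidenceGraph.
Variable F : finFieldType.

Definition incidence_edge (x : point F * F) : {set vertex F} :=
  [set inl x.1; inr (line_through x.1 x.2)].

Definition incidence_graph : {set {set vertex F}} := [set incidence_edge x | x : point F * F].

Lemma incidence_edge_inj : injective incidence_edge.
Proof. by move=> [p c] [p' c'] /set2_eq [] // [] // [<-] [] <-. Qed.

Lemma incidence_graph_adj (u v : vertex F) : [set u; v] \in incidence_graph -> adj u v.
Proof.
case/imsetP => -[p c] _ /esym /set2_eq [] // [<- <-]; last rewrite adjC.
all: exact: incident_line_through.
Qed.

Lemma incidence_graph_simple : simple_graph incidence_graph.
Proof. by apply/forallP => e; apply/implyP => /imsetP [x _ ->]; rewrite cards2. Qed.

Lemma card_vertex : #|{: vertex F}| = 2 * #|F| ^ 4.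
Proof. by rewrite card_sum !card_prod card_ffun card_ord -expnS mul2n addnn. Qed.

Lemma nedges_incidence_graph : nedges incidence_graph = #|F| ^ 5.
Proof.
rewrite /nedges card_imset; last exact: incidence_edge_inj.
by rewrite cardT -cardE !card_prod card_ffun card_ord -expnS -expnSr.
Qed.

Lemma incidence_graph_Theta355_free : ~~ contains_subgraph incidence_graph Theta355.
Proof.
apply/negP => /existsP [f /andP [/injectiveP f_inj /forallP f_hom]].
apply: (@no_injective_theta_hom _ (fun k => f (inord k))).
  move=> i j ij; apply: incidence_graph_adj.
  by move: (implyP (f_hom _) (Theta355_edge ij)); rewrite imsetU1 imset_set1.
by move=> i j i12 j12 /f_inj /(congr1 val); rewrite /= !inordK.
Qed.

Lemma ex_Theta355_ge (n : nat) : 2 * #|F| ^ 4 <= n -> #|F| ^ 5 <= ex n Theta355.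
Proof.
rewrite -card_vertex -nedges_incidence_graph => Vn.
exact: nedges_le_ex Vn Theta355_cover incidence_graph_simple incidence_graph_Theta355_free.
Qed.

End FiniteIncidenceGraph.

Lemma ex_Theta355_ge_pow2 (k n : nat) : 0 < k -> 2 * 16 ^ k <= n -> 32 ^ k <= ex n Theta355.
Proof.
move=> k0; have [F _ cardF] := @pPrimePowerField 2 k isT k0.
by move: (@ex_Theta355_ge F n); rewrite cardF !(expnAC 2 k).
Qed.

Lemma pow16_window (n : nat) : 32 <= n -> exists2 k, 0 < k & 2 * 16 ^ k <= n < 32 * 16 ^ k.
Proof.
move=> n32; set k := trunc_log 16 (n %/ 2).
have lo : 16 ^ k <= n %/ 2 by apply: trunc_logP; lia.
have hi : n %/ 2 < 16 ^ k.+1 by apply: trunc_log_ltn.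
exists k; first by rewrite trunc_log_gt0 /=; lia.
by move: hi; rewrite expnS; lia.
Qed.

Lemma pow16_window_bound (k n : nat) : n < 32 * 16 ^ k -> n ^ 5 <= (128 * 32 ^ k) ^ 4.
Proof.
move=> nk; apply: (@leq_trans ((32 * 16 ^ k) ^ 5)); first by rewrite leq_exp2r // ltnW.
rewrite -[32]/(2 ^ 5) -[16]/(2 ^ 4) -[128]/(2 ^ 7) -!expnM -!expnD -!expnM.
by rewrite leq_exp2l //; lia.
Qed.

(* ssralg rebinds the key %R to ring_scope; the statement below needs it for R_scope. *)
Delimit Scope R_scope with R.

Lemma INR_expn (m e : nat) : INR (m ^ e) = (INR m ^ e)%R.
Proof. by elim: e => // e IH; rewrite expnS -multE mult_INR IH. Qed.

Lemma Rpower_5_4_le (n m : nat) :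
  (0 < n)%N -> (n ^ 5 <= m ^ 4)%N -> (Rpower (INR n) (5 / 4) <= INR m)%R.
Proof.
move=> n0 nm.
have n0R : (0 < INR n)%R by apply/lt_0_INR/ltP.
have m0R : (0 < INR m)%R.
  apply/lt_0_INR/ltP; have : (0 < m ^ 4)%N by apply: leq_trans nm; rewrite expn_gt0 n0.
  by rewrite expn_gt0 orbF.
have root (x : R) (k : nat) : (0 < x)%R -> (0 < k)%N -> x = Rpower (x ^ k) (/ INR k).
  move=> x0 k0; rewrite -Rpower_pow // Rpower_mult Rinv_r ?Rpower_1 //.
  by apply: not_0_INR; lia.
rewrite [X in (_ <= X)%R](root _ 4) // (_ : 5 / 4 = INR 5 * / INR 4)%R; last first.
  by rewrite !INR_IZR_INZ /=; lra.
rewrite -Rpower_mult Rpower_pow //; apply: Rle_Rpower_l.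
  by apply/Rlt_le/Rinv_0_lt_compat/lt_0_INR/ltP.
by split; [apply: pow_lt | rewrite -!INR_expn; apply/le_INR/leP].
Qed.

Theorem proposition4p1 :
  exists (c : R) (N : nat), (0 < c)%R /\
    forall n : nat, (N <= n)%N ->
      (c * Rpower (INR n) (5 / 4) <= INR (ex n Theta355))%R.
Proof.
exists (/ 128)%R, 32; split; first lra.
move=> n n32; have [k k0 /andP [lo hi]] := pow16_window n32.
have := Rpower_5_4_le (leq_trans (isT : 0 < 32) n32) (pow16_window_bound hi).
rewrite mult_INR (_ : INR 128 = 128)%R; last by rewrite INR_IZR_INZ.
have : (INR (32 ^ k) <= INR (ex n Theta355))%R by apply/le_INR/leP/ex_Theta355_ge_pow2.
lra.
Qed.
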